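(* Let $H=\langle a_1,\dots,a_\ell\rangle$, $R=k[[H]]$, $r=\mathrm r(R)\ge2$, and write $\mathrm{PF}(H)=\{c_1<c_2<\dots<c_r=f\}$. Assume $R$ is a $2$-AGL ring. Then $K/R\cong(R/\mathfrak c)^{\oplus(r-1)}$ as $R$-modules if and only if there is $1\le j\le\ell$ with $f+a_j=c_i+c_{r-i}$ for all $1\le i\le r-1$.
   Context: $k$ is a field; $a_1,\dots,a_\ell$ positive integers with $\gcd=1$; $H=\langle a_1,\dots,a_\ell\rangle$ the numerical semigroup they generate; $R=k[[t^{a_1},\dots,t^{a_\ell}]]\subseteq k[[t]]$. $f=\max(\mathbb Z\setminus H)$, $\mathrm{PF}(H)=\{n\in\mathbb Z\setminus H:n+a_i\in H\ \forall i\}$, $\mathrm r(R)=\#\mathrm{PF}(H)$. Fractional canonical ideal $K=\sum_{c\in\mathrm{PF}(H)}Rt^{f-c}$, $S=R[K]$, $\mathfrak c=R:S=\{z\in\mathrm Q(R): zS\subseteq R\}$. $R$ is $2$-AGL iff $\ell_R(S/K)=2$. *)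

From HB Require Import structures.
From mathcomp Require Import all_boot all_order all_algebra.
Set Implicit Arguments. Unset Strict Implicit. Unset Printing Implicit Defensive.
Import GRing.Theory.
Local Open Scope ring_scope.

Definition series (k : fieldType) := nat -> k.
Definition szero (k : fieldType) : series k := fun _ => 0.
Definition sadd (k : fieldType) (x y : series k) : series k := fun n => x n + y n.
Definition sopp (k : fieldType) (x : series k) : series k := fun n => - x n.
Definition ssub (k : fieldType) (x y : series k) : series k := sadd x (sopp y).
Definition smul (k : fieldType) (x y : series k) : series k :=
  fun n => \sum_(i < n.+1) x i * y (n - i)%N.
Definition smono (k : fieldType) (m : nat) : series k :=
  fun n => if n == m then 1 else 0.

Definition inH (l : nat) (a : 'I_l -> nat) (n : nat) : Prop :=
  exists c : 'I_l -> nat, n = (\sum_(i < l) c i * a i)%N.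

Definition isPF (l : nat) (a : 'I_l -> nat) (n : nat) : Prop :=
  ~ inH a n /\ forall i : 'I_l, inH a (n + a i)%N.

Definition is_frobenius (l : nat) (a : 'I_l -> nat) (f : nat) : Prop :=
  ~ inH a f /\ forall n : nat, (f < n)%N -> inH a n.

Definition semigroupR (k : fieldType) (l : nat) (a : 'I_l -> nat)
  (x : series k) : Prop :=
  forall n : nat, x n != 0 -> inH a n.

(* K = sum_{c in PF(H)} R t^{f-c}, where cs enumerates PF(H) *)
Definition canonK (k : fieldType) (l : nat) (a : 'I_l -> nat) (f : nat)
  (cs : seq nat) (x : series k) : Prop :=
  exists coef : nat -> series k,
    (forall i, (i < size cs)%N -> semigroupR a (coef i)) /\
    forall n, x n = \sum_(i < size cs) smul (coef i) (smono k (f - nth 0%N cs i)) n.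

(* the subring generated by P and Q (P containing 1): R[K] *)
Inductive ring_gen (k : fieldType) (P Q : series k -> Prop) : series k -> Prop :=
| RG_P x : P x -> ring_gen P Q x
| RG_Q x : Q x -> ring_gen P Q x
| RG_add x y : ring_gen P Q x -> ring_gen P Q y -> ring_gen P Q (sadd x y)
| RG_mul x y : ring_gen P Q x -> ring_gen P Q y -> ring_gen P Q (smul x y)
| RG_ext x y : ring_gen P Q x -> (forall n, x n = y n) -> ring_gen P Q y.

Definition ringS (k : fieldType) (l : nat) (a : 'I_l -> nat) (f : nat)
  (cs : seq nat) : series k -> Prop :=
  ring_gen (semigroupR a) (canonK a f cs).

(* c = R : S  (automatically contained in R since 1 in S) *)
Definition conductor (k : fieldType) (l : nat) (a : 'I_l -> nat) (f : nat)
  (cs : seq nat) (z : series k) : Prop :=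
  forall s, ringS a f cs s -> semigroupR a (smul z s).

Definition Rsubmod (k : fieldType) (Rp : series k -> Prop) (P : series k -> Prop) : Prop :=
  [/\ P (szero k),
      (forall x y, P x -> P y -> P (sadd x y)),
      (forall r x, Rp r -> P x -> P (smul r x)) &
      (forall x y, P x -> (forall n, x n = y n) -> P y)].

Definition has_chain (k : fieldType) (Rp : series k -> Prop)
  (N M : series k -> Prop) (n : nat) : Prop :=
  exists C : nat -> (series k -> Prop),
    [/\ (forall x, C 0%N x <-> N x),
        (forall x, C n x <-> M x),
        (forall i, (i <= n)%N -> Rsubmod Rp (C i)) &
        (forall i, (i < n)%N ->
           (forall x, C i x -> C i.+1 x) /\ exists x, C i.+1 x /\ ~ C i x)].

Definition lengthR (k : fieldType) (Rp : series k -> Prop)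
  (N M : series k -> Prop) (n : nat) : Prop :=
  has_chain Rp N M n /\ ~ has_chain Rp N M n.+1.

Definition is_2AGL (k : fieldType) (l : nat) (a : 'I_l -> nat) (f : nat)
  (cs : seq nat) : Prop :=
  lengthR (semigroupR (k:=k) a) (canonK a f cs) (ringS a f cs) 2.

(* M/N isomorphic to (Rp/I)^{(m)} as Rp-modules, expressed by a lifted map
   psi : M -> Rp^m inducing an Rp-linear bijection M/N -> (Rp/I)^m. *)
Definition quot_iso_pow (k : fieldType) (Rp : series k -> Prop)
  (M N I : series k -> Prop) (m : nat) : Prop :=
  exists psi : series k -> 'I_m -> series k,
  (forall x, M x -> forall j, Rp (psi x j)) /\
      (forall x y, M x -> (forall n, x n = y n) -> forall j, I (ssub (psi x j) (psi y j))) /\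
      (forall x y, M x -> M y -> forall j,
          I (ssub (ssub (psi (sadd x y) j) (psi x j)) (psi y j))) /\
      (forall r x, Rp r -> M x -> forall j,
          I (ssub (psi (smul r x) j) (smul r (psi x j)))) /\
      (forall v : 'I_m -> series k, (forall j, Rp (v j)) ->
          exists x, M x /\ forall j, I (ssub (psi x j) (v j))) /\
      (forall x, M x -> ((forall j, I (psi x j)) <-> N x)).

From HB Require Import structures.
From mathcomp Require Import all_boot all_order all_algebra.
From mathcomp Require Import zify ring boolp.
Set Implicit Arguments. Unset Strict Implicit. Unset Printing Implicit Defensive.
Import GRing.Theory.
Local Open Scope ring_scope.

(* Let [Kexp] be the exponents [n] with [f - n] not in [H] (those of the canonical module
   [K]), and [Kgen] the monoid they generate (the exponents of [S = R[K]]).  Three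
   exponents of [S] outside [K] would give a chain of length 3 from [K] to [S], and [f]
   alone would make [S/K] one-dimensional; so for a 2-AGL ring the exponents of [S]
   outside [K] are exactly [f] and [f - al] for some [al] in [H].  It follows that every
   element of [H] other than [0] and [al] moves [S] into [R], that [al] is an atom of [H]
   and that [c] consists of the series of [R] with zero coefficients at [0] and [al].
   If [K/R] is isomorphic to [(R/c)^(r-1)], no two pseudo-Frobenius numbers [c_p, c_q < f]
   add up to [f]: otherwise [t^(f - c_q)] is a class killed by [t^al], hence [t^al] times
   another class, and subtracting puts a monomial of [K \ R] into [R].  Then
   [f - c_p + al] is again pseudo-Frobenius, [al] is a generator, and
   [p |-> index (f - c_p + al)] is an order-reversing map of [0 .. r-2] into itself,
   i.e. [c_p + c_(r-2-p) = f + al].  Conversely, under this symmetry the exponents of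
   [K] outside [H] are exactly the [f - c_j] and [f - c_j + al], and the coefficients
   at these two exponents give the isomorphism. *)

Lemma decreasing_rev m (s : nat -> nat) :
  (forall p, (p < m)%N -> (s p < m)%N) ->
  (forall p q, (p < q)%N -> (q < m)%N -> (s q < s p)%N) ->
  forall p, (p < m)%N -> s p = (m.-1 - p)%N.
Proof.
move=> s_lt s_decr.
have up p : (p < m)%N -> (s p + p <= m.-1)%N.
  elim: p => [/s_lt|p IH lt_pm]; first lia.
  by have := IH (ltnW lt_pm); have := s_decr p p.+1 (ltnSn p) lt_pm; lia.
have lo d : (d < m)%N -> (d <= s (m.-1 - d))%N.
  elim: d => [//|d IH lt_dm]; have := IH (ltnW lt_dm).
  by have := s_decr (m.-1 - d.+1)%N (m.-1 - d)%N; lia.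
by move=> p lt_pm; have := up p lt_pm; have := lo (m.-1 - p)%N; rewrite subKn; lia.
Qed.

Section Series.
Variable k : fieldType.
Implicit Types (x y : series k) (E F G : nat -> Prop).

Definition sconst (c : k) : series k := fun n => if n == 0%N then c else 0.

Lemma sconst0 c : sconst c 0%N = c.
Proof. by []. Qed.

Definition supp_in E x := forall n, x n != 0 -> E n.

Lemma sum_ord_neq0 n (F : 'I_n -> k) : \sum_(i < n) F i != 0 -> exists i, F i != 0.
Proof.
apply: contraTP => /forallNP F0; rewrite negbK; apply/eqP/big1 => i _.
exact/eqP/negbNE/negP/F0.
Qed.

Lemma smul_neq0 x y n : smul x y n != 0 ->
  exists2 i, (i <= n)%N & x i != 0 /\ y (n - i)%N != 0.
Proof.
case/sum_ord_neq0 => i; rewrite mulf_eq0 negb_or => /andP[xi yi].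
by exists i => //; rewrite -ltnS.
Qed.

Lemma smul_coef1 x y n j : (j <= n)%N ->
  (forall i, (i <= n)%N -> i != j -> x i * y (n - i)%N = 0) ->
  smul x y n = x j * y (n - j)%N.
Proof.
move=> jn xy0; rewrite /smul (bigD1 (Ordinal (jn : j < n.+1)%N)) //= big1 ?addr0 //.
by move=> i ij; apply: xy0 => //; rewrite -ltnS.
Qed.

Lemma smul_coef2 x y n j1 j2 : (j1 <= n)%N -> (j2 <= n)%N -> j1 != j2 ->
  (forall i, (i <= n)%N -> i != j1 -> i != j2 -> x i * y (n - i)%N = 0) ->
  smul x y n = x j1 * y (n - j1)%N + x j2 * y (n - j2)%N.
Proof.
move=> j1n j2n j12 xy0.
rewrite /smul (bigD1 (Ordinal (j1n : j1 < n.+1)%N)) //=.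
rewrite (bigD1 (Ordinal (j2n : j2 < n.+1)%N)) /=; last by rewrite -val_eqE eq_sym.
by rewrite big1 ?addr0 // => i /andP[i1 i2]; apply: xy0 => //; rewrite -ltnS.
Qed.

Lemma smul_coef0 x y : smul x y 0%N = x 0%N * y 0%N.
Proof. by rewrite /smul big_ord1. Qed.

Lemma smonoE m n : smono k m n = (n == m)%:R.
Proof. by rewrite /smono; case: (n =P m). Qed.

Lemma smono_diag m : smono k m m = 1.
Proof. by rewrite /smono eqxx. Qed.

Lemma smono_neq0 m n : smono k m n != 0 -> n = m.
Proof. by rewrite /smono; case: (n =P m) => // _; rewrite eqxx. Qed.

Lemma smono_mulL m x n :
  smul (smono k m) x n = if (m <= n)%N then x (n - m)%N else 0.
Proof.
case: leqP => mn.
  rewrite (@smul_coef1 _ _ _ m) // ?smonoE ?eqxx ?mul1r // => i _ im.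
  by rewrite smonoE (negbTE im) mul0r.
apply: big1 => i _; rewrite smonoE; case: eqP => [im|]; last by rewrite mul0r.
by move: (ltn_ord i); rewrite im; lia.
Qed.

Lemma smono_mulR m x n :
  smul x (smono k m) n = if (m <= n)%N then x (n - m)%N else 0.
Proof.
case: leqP => mn.
  rewrite (@smul_coef1 _ _ _ (n - m)) ?leq_subr // ?subKn // ?smonoE ?eqxx ?mulr1 //.
  move=> i i_n im; rewrite smonoE; case: eqP => [nim|]; last by rewrite mulr0.
  by move/eqP: im; lia.
apply: big1 => i _; rewrite smonoE; case: eqP => [nim|]; last by rewrite mulr0.
by move: (ltn_ord i); lia.
Qed.

Lemma sconst_mul c x n : smul (sconst c) x n = c * x n.
Proof.
rewrite (@smul_coef1 _ _ _ 0) ?subn0 // => i _ /negbTE i0.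
by rewrite /sconst i0 mul0r.
Qed.

Lemma smono_mul m1 m2 n : smul (smono k m1) (smono k m2) n = smono k (m1 + m2) n.
Proof.
rewrite smono_mulL !smonoE; case: leqP => mn; last by case: eqP => //; lia.
by congr (_%:R); apply/eqP/eqP; lia.
Qed.

Lemma supp_in_ext E x y : supp_in E x -> (forall n, x n = y n) -> supp_in E y.
Proof. by move=> Ex xy n; rewrite -xy; apply: Ex. Qed.

Lemma supp_in_szero E : supp_in E (szero k).
Proof. by move=> n; rewrite eqxx. Qed.

Lemma supp_in_smono E m : E m -> supp_in E (smono k m).
Proof. by move=> Em n /smono_neq0->. Qed.

Lemma supp_in_sconst E c : E 0%N -> supp_in E (sconst c).
Proof. by move=> E0 n; rewrite /sconst; case: (n =P 0%N) => [->|_]; rewrite ?eqxx. Qed.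

Lemma supp_in_sadd E x y : supp_in E x -> supp_in E y -> supp_in E (sadd x y).
Proof.
move=> Ex Ey n; rewrite /sadd; have [x0|/Ex //] := eqVneq (x n) 0.
by rewrite x0 add0r; apply: Ey.
Qed.

Lemma supp_in_ssub E x y : supp_in E x -> supp_in E y -> supp_in E (ssub x y).
Proof. by move=> Ex Ey; apply: supp_in_sadd => // n; rewrite oppr_eq0; apply: Ey. Qed.

Lemma supp_in_smul E F G x y : (forall m n, E m -> F n -> G (m + n)%N) ->
  supp_in E x -> supp_in F y -> supp_in G (smul x y).
Proof.
move=> EFG Ex Fy n /smul_neq0[i le_in [/Ex Ei /Fy Fni]].
by rewrite -(subnKC le_in); apply: EFG.
Qed.

Lemma Rsubmod_supp_in E F : (forall h n, E h -> F n -> F (h + n)%N) ->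
  Rsubmod (supp_in E) (supp_in F).
Proof.
move=> EF; split; [exact: supp_in_szero | exact: supp_in_sadd | | exact: supp_in_ext].
by move=> r x; apply: supp_in_smul.
Qed.

Lemma Rsubmod_meet (Rp P Q : series k -> Prop) :
  Rsubmod Rp P -> Rsubmod Rp Q -> Rsubmod Rp (fun x => P x /\ Q x).
Proof.
case=> P0 PD PM Pe [Q0 QD QM Qe]; split => //.
- by move=> x y [Px Qx] [Py Qy]; split; [apply: PD | apply: QD].
- by move=> r x Rr [Px Qx]; split; [apply: PM | apply: QM].
- by move=> x y [Px Qx] xy; split; [apply: Pe xy | apply: Qe xy].
Qed.

Lemma eq_Rsubmod (Rp P Q : series k -> Prop) :
  (forall x, P x <-> Q x) -> Rsubmod Rp P -> Rsubmod Rp Q.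
Proof.
move=> PQ [P0 PD PM Pe]; split.
- exact/PQ.
- by move=> x y /PQ Px /PQ Py; apply/PQ/PD.
- by move=> r x Rr /PQ Px; apply/PQ/PM.
- by move=> x y /PQ Px xy; apply/PQ/(Pe _ _ Px xy).
Qed.

End Series.

Section Semigroup.
Variables (l : nat) (a : 'I_l -> nat).
Local Notation inH := (inH a).

Lemma inH0 : inH 0.
Proof. by exists (fun _ => 0%N); rewrite big1. Qed.

Lemma inH_gen i : inH (a i).
Proof.
exists (fun j => (j == i) : nat).
by rewrite (bigD1 i) //= eqxx mul1n big1 ?addn0 // => j /negbTE->.
Qed.

Lemma inHD m n : inH m -> inH n -> inH (m + n).
Proof.
move=> [c1 ->] [c2 ->]; exists (fun i => c1 i + c2 i)%N.
by rewrite -big_split; apply: eq_bigr => i _; rewrite mulnDl.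
Qed.

Lemma inH_subgen h : inH h -> h <> 0%N ->
  exists i, (a i <= h)%N /\ inH (h - a i).
Proof.
move=> [c Hc] h0; have [i ci] : exists i, (0 < c i)%N.
  apply: contrapT => /forallNP c0; apply: h0; rewrite Hc big1 // => i _.
  by have := c0 i; case: (c i).
pose c' j := if j == i then (c i).-1 else c j.
have -> : h = (a i + \sum_(j < l) c' j * a j)%N.
  rewrite Hc (bigD1 i) //= [in RHS](bigD1 i) //= /c' eqxx.
  rewrite -{1}(prednK ci) mulSn addnA; congr (_ + _)%N.
  by apply: eq_bigr => j /negbTE->.
by exists i; rewrite leq_addr addKn; split => //; exists c'.
Qed.

Lemma PF_addH x h : isPF a x -> inH h -> h <> 0%N -> inH (x + h).
Proof.
move=> [_ PFx] Hh h0; have [i [ai_h Hhi]] := inH_subgen Hh h0.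
by rewrite -(subnKC ai_h) addnA; apply: inHD.
Qed.

Section Frobenius.
Variable f : nat.
Hypothesis a_gt0 : forall i, (0 < a i)%N.
Hypothesis frob_f : is_frobenius a f.

Lemma frobenius_notH : ~ inH f.
Proof. exact: frob_f.1. Qed.

Lemma inH_gt_frobenius n : (f < n)%N -> inH n.
Proof. exact: frob_f.2. Qed.

Lemma gap_leq_frobenius n : ~ inH n -> (n <= f)%N.
Proof. by move=> Hn; rewrite leqNgt; apply/negP => /inH_gt_frobenius. Qed.

Lemma PF_leq_frobenius x : isPF a x -> (x <= f)%N.
Proof. by case=> /gap_leq_frobenius. Qed.

Lemma PF_neq0 x : isPF a x -> x <> 0%N.
Proof. by case=> Hx _ x0; apply: Hx; rewrite x0; apply: inH0. Qed.

Lemma frobenius_PF : isPF a f.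
Proof.
split=> [|i]; first exact: frobenius_notH.
by apply: inH_gt_frobenius; rewrite -addn1 leq_add2l.
Qed.

Lemma PF_compl_notH x : isPF a x -> x <> f -> ~ inH (f - x).
Proof.
move=> PFx xf Hfx; have le_xf := PF_leq_frobenius PFx.
apply: frobenius_notH; rewrite -(subnKC le_xf); apply: PF_addH => //; lia.
Qed.

Section PseudoFrobenius.
Variable cs : seq nat.
Hypothesis cs_sorted : sorted ltn cs.
Hypothesis csP : forall n, n \in cs <-> isPF a n.
Hypothesis cs_ge2 : (2 <= size cs)%N.

Local Notation r := (size cs).
Local Notation m := (size cs).-1.
Local Notation c p := (nth 0%N cs p).

Lemma ltm_ltr p : (p < m)%N -> (p < r)%N.
Proof. by move/leq_trans; apply; apply: leq_pred. Qed.

Lemma cs_PF p : (p < r)%N -> isPF a (c p).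
Proof. by move=> pr; apply/csP/mem_nth. Qed.

Lemma cs_ltn p q : (p < q)%N -> (q < r)%N -> (c p < c q)%N.
Proof.
move=> pq qr; apply: (sorted_ltn_nth ltn_trans 0%N cs_sorted) => //.
by rewrite inE (ltn_trans pq).
Qed.

Lemma cs_leq p q : (p <= q)%N -> (q < r)%N -> (c p <= c q)%N.
Proof.
by rewrite leq_eqVlt => /predU1P[->//|pq] qr; apply/ltnW/cs_ltn.
Qed.

Lemma cs_inj p q : (p < r)%N -> (q < r)%N -> c p = c q -> p = q.
Proof.
move=> pr qr cpq; case: (ltngtP p q) => // [pq|qp].
  by have := cs_ltn pq qr; rewrite cpq ltnn.
by have := cs_ltn qp pr; rewrite cpq ltnn.
Qed.

Lemma PF_index x : isPF a x -> exists2 q, (q < r)%N & c q = x.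
Proof. by move/csP => xcs; exists (index x cs); rewrite ?index_mem ?nth_index. Qed.

Lemma cs_leqf p : (p < r)%N -> (c p <= f)%N.
Proof. by move/cs_PF/PF_leq_frobenius. Qed.

Lemma cs_compl_inj p q : (p < r)%N -> (q < r)%N -> (f - c p = f - c q)%N -> p = q.
Proof.
move=> pr qr E; apply: cs_inj => //.
by have := cs_leqf pr; have := cs_leqf qr; lia.
Qed.

Lemma cs_last : c m = f.
Proof.
have [q qr cq] := PF_index frobenius_PF.
have mr : (m < r)%N by rewrite prednK //; lia.
apply/eqP; rewrite eqn_leq cs_leqf //= -{1}cq.
by apply: cs_leq => //; rewrite -ltnS prednK //; lia.
Qed.

Lemma PF_index_ltm x : isPF a x -> x <> f -> exists2 q, (q < m)%N & c q = x.
Proof.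
move=> PFx xf; have [q qr cq] := PF_index PFx; exists q => //.
rewrite ltn_neqAle -ltnS prednK ?qr ?andbT //; last lia.
by apply/eqP => qm; apply: xf; rewrite -cq qm cs_last.
Qed.

Lemma cs_ltf p : (p < m)%N -> (c p < f)%N.
Proof. by move=> pm; rewrite -cs_last; apply: cs_ltn; lia. Qed.


(* The exponents [n] with [f - n] not in [H], read in [Z] (hence all [n > f]). *)
Definition Kexp n := ~ ((n <= f)%N /\ inH (f - n)).

Lemma Kexp_subf x : (x <= f)%N -> Kexp (f - x) <-> ~ inH x.
Proof.
move=> le_xf; rewrite /Kexp subKn // leq_subr.
by split=> [K Hx|H [_ Hx]]; [apply: K | apply: H].
Qed.

Lemma Kexp_H n : inH n -> Kexp n.
Proof.
move=> Hn [le_nf Hfn]; apply: frobenius_notH.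
by rewrite -(subnKC le_nf); apply: inHD.
Qed.

Lemma KexpD n h : Kexp n -> inH h -> Kexp (n + h).
Proof.
move=> Kn Hh [le_nhf Hfnh]; apply: Kn; split; first lia.
by rewrite (_ : f - n = f - (n + h) + h)%N; [apply: inHD | lia].
Qed.

Lemma notKexp n : ~ Kexp n -> (n <= f)%N /\ inH (f - n).
Proof. exact: contrapT. Qed.

Lemma Kexp_frobenius : ~ Kexp f.
Proof. by apply; rewrite subnn; split=> //; apply: inH0. Qed.

Lemma Kexp_cs_compl p : (p < r)%N -> Kexp (f - c p).
Proof. by move=> pr; apply/Kexp_subf; [apply: cs_leqf | case: (cs_PF pr)]. Qed.

Lemma cs_compl_notH p : (p < m)%N -> ~ inH (f - c p).
Proof.
move=> pm; apply: PF_compl_notH; first by apply: cs_PF; lia.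
by have := cs_ltf pm; lia.
Qed.

Lemma Kexp_cs p : (p < m)%N -> Kexp (c p).
Proof.
move=> pm; rewrite -(subKn (cs_leqf (ltn_trans pm _))) ?prednK //; last lia.
by apply/Kexp_subf; [apply: leq_subr | apply: cs_compl_notH].
Qed.

(* A maximal gap [x] with [x - (f - n)] in [H] is pseudo-Frobenius. *)
Lemma Kexp_PF_shift n : Kexp n ->
  exists p, [/\ (p < r)%N, (f - c p <= n)%N & inH (n - (f - c p))].
Proof.
move=> Kn; case: (leqP n f) => [le_nf|lt_fn]; last first.
  exists m; rewrite cs_last subnn subn0 prednK; last lia.
  by split=> //; apply: inH_gt_frobenius.
pose P x := `[< [/\ (f - n <= x)%N, (x <= f)%N, ~ inH x & inH (x - (f - n))] >].
have exP : exists x, P x.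
  exists (f - n)%N; apply/asboolP; rewrite subnn leq_subr.
  by split=> //; [move=> Hfn; apply: Kn | apply: inH0].
have ubP x : P x -> (x <= f)%N by case/asboolP.
case: (ex_maxnP exP ubP) => x /asboolP[le_fn_x le_xf Hx Hxn] x_max.
have PFx : isPF a x.
  split=> // i; apply: contrapT => Hxi.
  suff /x_max : P (x + a i)%N by have := a_gt0 i; lia.
  apply/asboolP; split=> //; [lia | exact: gap_leq_frobenius |].
  by rewrite -addnBAC //; apply/inHD/inH_gen.
have [p pr cp] := PF_index PFx; exists p; rewrite cp; split=> //; first lia.
by rewrite (_ : n - (f - x) = x - (f - n))%N //; lia.
Qed.

Variable k : fieldType.
Local Notation Rs := (semigroupR (k:=k) a).
Local Notation Ks := (canonK (k:=k) a f cs).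
Local Notation Ss := (ringS (k:=k) a f cs).

Lemma R_sconst c : Rs (sconst c).
Proof. by apply: supp_in_sconst; apply: inH0. Qed.

Lemma canonK_supp x : Ks x -> supp_in Kexp x.
Proof.
case=> coef [Rcoef xE] n; rewrite xE => /sum_ord_neq0[p]; rewrite smono_mulR.
case: leqP => [le_cp_n|]; last by rewrite eqxx.
have [cpH _] := cs_PF (ltn_ord p); have le_pf := cs_leqf (ltn_ord p).
move/(Rcoef _ (ltn_ord p)) => Hnp [le_nf Hfn]; apply: cpH.
by rewrite (_ : c p = f - n + (n - (f - c p)))%N; [apply: inHD | lia].
Qed.

Lemma supp_canonK x : supp_in Kexp x -> Ks x.
Proof.
move=> Kx.
pose shift n := [pick p : 'I_r | `[< (f - c p <= n)%N /\ inH (n - (f - c p)) >]].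
pose coef (p : nat) j := let n := (j + (f - c p))%N in
  if oapp (fun q : 'I_r => q == p :> nat) false (shift n) then x n else 0.
exists coef; split.
  move=> p pr j; rewrite /coef /shift; case: pickP => [q /asboolP[_ Hq]|_] /=.
    by case: (q =P p :> nat) => [qp _|_]; [rewrite qp addnK in Hq | rewrite eqxx].
  by rewrite eqxx.
move=> n.
have coefE p : smul (coef p) (smono k (f - c p)) n =
    if (f - c p <= n)%N && oapp (fun q : 'I_r => q == p :> nat) false (shift n)
    then x n else 0.
  by rewrite smono_mulR /coef; case: leqP => //= le; rewrite subnK.
under eq_bigr => p _ do rewrite coefE.
case E : (shift n) => [q|] /=.
  rewrite (bigD1 q) //= eqxx andbT big1 ?addr0 => [|p /negbTE]; last first.
    by rewrite val_eqE eq_sym => ->; rewrite andbF.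
  by move: E; rewrite /shift; case: pickP => //= q' /asboolP[le _] [<-]; rewrite le.
rewrite big1 => [|p _]; last by rewrite andbF.
apply/eqP; apply: contraT => /Kx/Kexp_PF_shift[p [pr le_p Hp]].
move: E; rewrite /shift; case: pickP => // /(_ (Ordinal pr)) /negbT /asboolPn nP.
by exfalso; apply: nP.
Qed.

Lemma canonKP x : Ks x <-> supp_in Kexp x.
Proof. by split; [apply: canonK_supp | apply: supp_canonK]. Qed.

Lemma Rsubmod_canonK : Rsubmod Rs Ks.
Proof.
apply: (eq_Rsubmod (fun x => iff_sym (canonKP x))).
by apply: Rsubmod_supp_in => h n Hh Kn; rewrite addnC; apply: KexpD.
Qed.

Lemma canonK_add x y : Ks x -> Ks y -> Ks (sadd x y).
Proof. by case: Rsubmod_canonK => _ KD _ _; apply: KD. Qed.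

Lemma canonK_mul r x : Rs r -> Ks x -> Ks (smul r x).
Proof. by case: Rsubmod_canonK => _ _ KM _; apply: KM. Qed.

Lemma canonK_R x : Rs x -> Ks x.
Proof. by move=> Rx; apply/canonKP => n /Rx/Kexp_H. Qed.

Lemma canonK_smono n : Kexp n -> Ks (smono k n).
Proof. by move=> Kn; apply/canonKP; apply: supp_in_smono. Qed.

Lemma Rsubmod_ringS : Rsubmod Rs Ss.
Proof.
split.
- by apply: RG_P; apply: supp_in_szero.
- by move=> x y; apply: RG_add.
- by move=> r x Rr; apply: RG_mul; apply: RG_P.
- by move=> x y; apply: RG_ext.
Qed.

Definition Kgen n := exists2 ls : seq nat, (forall e, e \in ls -> Kexp e) & sumn ls = n.

Lemma Kgen_Kexp e : Kexp e -> Kgen e.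
Proof. by exists [:: e]; rewrite /= ?addn0 // => e'; rewrite inE => /eqP->. Qed.

Lemma KgenD m n : Kgen m -> Kgen n -> Kgen (m + n).
Proof.
move=> [ls1 Kls1 <-] [ls2 Kls2 <-]; exists (ls1 ++ ls2); last exact: sumn_cat.
by move=> e; rewrite mem_cat => /orP[/Kls1|/Kls2].
Qed.

Lemma ringS_supp s : Ss s -> supp_in Kgen s.
Proof.
elim=> {s} [x Rx|x /canonKP Kx|x y _ Sx _ Sy|x y _ Sx _ Sy|x y _ Sx xy].
- by move=> n /Rx/Kexp_H/Kgen_Kexp.
- by move=> n /Kx/Kgen_Kexp.
- exact: supp_in_sadd.
- exact: supp_in_smul KgenD _ _.
- exact: supp_in_ext xy.
Qed.

Lemma ringS_smono n : Kgen n -> Ss (smono k n).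
Proof.
case=> ls; elim: ls n => [n _ <-|e ls IH n Kls <-].
  by apply: RG_P; apply: supp_in_smono; apply: inH0.
have Ke : Kexp e by apply: Kls; rewrite inE eqxx.
have Sls : Ss (smono k (sumn ls)).
  by apply: IH => // e' e'ls; apply: Kls; rewrite inE e'ls orbT.
by apply: RG_ext (RG_mul (RG_Q _ (canonK_smono Ke)) Sls) _ => n'; apply: smono_mul.
Qed.

Lemma Kgen_frobenius : Kgen f.
Proof.
have m0 : (0 < m)%N by lia.
rewrite -(subnK (cs_leqf (_ : 0 < r)%N)); last lia.
by apply: KgenD; apply: Kgen_Kexp; [apply: Kexp_cs_compl | apply: Kexp_cs]; lia.
Qed.

Definition Sabove y x := Ss x /\ supp_in (fun n => Kexp n \/ (y <= n)%N) x.

Lemma Rsubmod_Sabove y : Rsubmod Rs (Sabove y).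
Proof.
apply: (Rsubmod_meet Rsubmod_ringS); apply: Rsubmod_supp_in => h n Hh [Kn|le_yn].
  by left; rewrite addnC; apply: KexpD.
by right; apply: leq_trans le_yn (leq_addl _ _).
Qed.

Lemma smono_Sabove y n : Kgen n -> Sabove y (smono k n) <-> Kexp n \/ (y <= n)%N.
Proof.
move=> Gn; split=> [[_ /(_ n)]|Kn]; first by rewrite smono_diag oner_neq0 => /(_ isT).
by split; [apply: ringS_smono | apply: supp_in_smono].
Qed.

(* [K < S_{>= y3} < S_{>= y2} < S], where [S_{>= y}] allows in addition to [K] the
   exponents [>= y]. *)
Lemma chain3 y1 y2 y3 : (y1 < y2 < y3)%N ->
  Kgen y1 -> Kgen y2 -> Kgen y3 -> ~ Kexp y1 -> ~ Kexp y2 -> ~ Kexp y3 ->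
  has_chain Rs Ks Ss 3.
Proof.
move=> /andP[lt12 lt23] G1 G2 G3 K1 K2 K3.
exists (fun i => if i == 0%N then Ks else if i == 1%N then Sabove y3
                 else if i == 2%N then Sabove y2 else Ss).
split=> //.
- case=> [|[|[|[|i]]]] //= _;
    [exact: Rsubmod_canonK | exact: Rsubmod_Sabove | exact: Rsubmod_Sabove
    | exact: Rsubmod_ringS].
- case=> [|[|[|i]]] //= _; split.
  + move=> x Kx; split; first exact: RG_Q.
    by move=> n /(canonK_supp Kx) Kn; left.
  + exists (smono k y3); rewrite smono_Sabove //; split; first by right.
    by move/canonK_supp => /(_ y3); rewrite smono_diag oner_neq0 => /(_ isT).
  + by move=> x [Sx Ex]; split=> // n /Ex[Kn|le_n]; [left | right; lia].
  + exists (smono k y2); rewrite !smono_Sabove //.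
    by split; [right | case=> //; lia].
  + by move=> x [].
  + exists (smono k y1); rewrite smono_Sabove //.
    by split; [apply: ringS_smono | case=> //; lia].
Qed.

(* If [f] were the only exponent of [S] outside [K], [S/K] would be spanned by [t^f]. *)
Lemma chain2_gap : has_chain Rs Ks Ss 2 -> exists y, [/\ Kgen y, ~ Kexp y & y <> f].
Proof.
case=> C [C0 C2 Csub Cinc]; apply: contrapT => no_gap.
have gapE y : Kgen y -> ~ Kexp y -> y = f.
  by move=> Gy Ky; apply: contrapT => yf; apply: no_gap; exists y.
have [sub01 [x1 [C1x1 C0x1]]] := Cinc 0%N isT.
have [sub12 [x2 [C2x2 C1x2]]] := Cinc 1%N isT.
have [_ C1D C1M C1e] := Csub 1%N isT.
have Sx1 : Ss x1 by apply/C2/sub12.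
have Sx2 : Ss x2 by apply/C2.
have suppK (x : series k) : Ss x -> x f = 0 -> Ks x.
  move=> Sx xf0; apply/canonKP => n xn; apply: contrapT => Kn.
  have nf := gapE n (ringS_supp Sx xn) Kn.
  by rewrite nf xf0 eqxx in xn.
have x1f : x1 f != 0 by apply: contra_notN C0x1 => /eqP/(suppK _ Sx1)/C0.
pose lam := x2 f / x1 f.
pose w := sadd x2 (smul (sconst (- lam)) x1).
have Sw : Ss w by apply: RG_add Sx2 (RG_mul (RG_P _ (R_sconst (c := - lam))) Sx1).
have C1w : C 1%N w.
  by apply/sub01/C0/suppK; rewrite // /w /sadd sconst_mul mulNr mulfVK ?subrr.
apply: C1x2; apply: C1e _ _ (C1D _ _ C1w (C1M _ _ (R_sconst (c := lam)) C1x1)) _ => n.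
by rewrite /w /sadd !sconst_mul mulNr addrNK.
Qed.

Lemma gap_uniq : ~ has_chain Rs Ks Ss 3 -> forall y y',
  Kgen y -> ~ Kexp y -> y <> f -> Kgen y' -> ~ Kexp y' -> y' <> f -> y = y'.
Proof.
move=> no3 y y' Gy Ky yf Gy' Ky' y'f.
have [[le_yf _] [le_y'f _]] := (notKexp Ky, notKexp Ky').
case: (ltngtP y y') => // [lt|lt]; case: no3.
  by apply: (@chain3 y y' f) Gy Gy' Kgen_frobenius Ky Ky' Kexp_frobenius; lia.
by apply: (@chain3 y' y f) Gy' Gy Kgen_frobenius Ky' Ky Kexp_frobenius; lia.
Qed.

Lemma two_AGL_gaps : is_2AGL k a f cs -> exists al, [/\ inH al, al <> 0%N,
  (al <= f)%N, Kgen (f - al) & forall y, Kgen y -> ~ Kexp y -> y = f \/ y = (f - al)%N].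
Proof.
case=> /chain2_gap[y [Gy Ky yf]] no3; have [le_yf Hfy] := notKexp Ky.
exists (f - y)%N; rewrite subKn // leq_subr; split=> // [|y' Gy' Ky']; first lia.
case: (EM (y' = f)) => [|y'f]; [left | right] => //.
exact: gap_uniq no3 _ _ Gy' Ky' y'f Gy Ky yf.
Qed.

Local Notation Cs := (conductor (k:=k) a f cs).

Section TwoAGL.
Variable al : nat.
Hypothesis al_H : inH al.
Hypothesis al_neq0 : al <> 0%N.
Hypothesis al_leqf : (al <= f)%N.
Hypothesis Kgen_fsubal : Kgen (f - al).
Hypothesis gapsE : forall y, Kgen y -> ~ Kexp y -> y = f \/ y = (f - al)%N.

Lemma smono_al0 : smono k al 0%N = 0.
Proof. by rewrite smonoE (_ : (0 == al)%N = false) //; apply/eqP; lia. Qed.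

Lemma inH_KexpD e h : Kexp e -> inH h -> h <> 0%N -> h <> al -> inH (e + h).
Proof.
move=> Ke Hh h0 hal; apply: contrapT => Heh; have le_ehf := gap_leq_frobenius Heh.
have Kfeh : Kexp (f - (e + h)) by apply/Kexp_subf.
have := KgenD (Kgen_Kexp Ke) (Kgen_Kexp Kfeh).
rewrite (_ : e + (f - (e + h)) = f - h)%N => [Gfh|]; last lia.
have Kfh : ~ Kexp (f - h) by move/(Kexp_subf (leq_trans (leq_addl _ _) le_ehf)); apply.
by case: (gapsE Gfh Kfh); lia.
Qed.

Lemma notPF_addal_notH x : ~ inH x -> Kexp x -> ~ isPF a x -> ~ inH (x + al).
Proof.
move=> Hx Kx notPFx Hxal; apply: notPFx; split=> // i.
have [->|ai_al] := eqVneq (a i) al; first exact: Hxal.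
by apply: inH_KexpD; [| apply: inH_gen | have := a_gt0 i; lia | apply/eqP].
Qed.

Lemma Kexp_gap_PF x : Kexp x -> ~ inH x -> isPF a x \/ isPF a (f - x).
Proof.
move=> Kx Hx; have le_xf := gap_leq_frobenius Hx.
apply: contrapT => /not_orP[notPFx notPFfx].
have Hfx : ~ inH (f - x) by move=> Hfx; apply: Kx.
have Kfx : Kexp (f - x) by apply/Kexp_subf.
have Hxal := notPF_addal_notH Hx Kx notPFx.
have Hfxal := notPF_addal_notH Hfx Kfx notPFfx.
have [le_xal_f le_fxal_f] := (gap_leq_frobenius Hxal, gap_leq_frobenius Hfxal).
have K1 : Kexp (x - al).
  by move=> [_ H]; apply: Hfxal; rewrite (_ : f - x + al = f - (x - al))%N //; lia.
have K2 : Kexp (f - x - al).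
  by move=> [_ H]; apply: Hxal; rewrite (_ : x + al = f - (f - x - al))%N //; lia.
have := KgenD (Kgen_Kexp K1) (Kgen_Kexp K2).
rewrite (_ : x - al + (f - x - al) = f - (al + al))%N => [G2|]; last lia.
have K2al : ~ Kexp (f - (al + al)) by move/(Kexp_subf _); apply; [lia | apply: inHD].
by case: (gapsE G2 K2al); lia.
Qed.

Lemma Kexp_split_fsubal : exists e1 e2, [/\ Kexp e1, Kexp e2 & (e1 + e2 = f - al)%N].
Proof.
case: Kgen_fsubal => ls; elim: ls => [_ <-|e ls IH Kls /= E].
  by exists 0%N, 0%N; split=> //; apply/Kexp_H/inH0.
have Ke : Kexp e by apply: Kls; rewrite inE eqxx.
have Kls' e' : e' \in ls -> Kexp e' by move=> e'ls; apply: Kls; rewrite inE e'ls orbT.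
have [Kl|Kl] := EM (Kexp (sumn ls)); first by exists e, (sumn ls).
case: (gapsE (ex_intro2 _ _ ls Kls' erefl) Kl) => El; first lia.
by apply: IH => //; lia.
Qed.

Lemma inH_KgenD h t : inH h -> h <> 0%N -> h <> al -> Kgen t -> inH (h + t).
Proof.
move=> Hh h0 hal Gt; have [Kt|Kt] := EM (Kexp t).
  by rewrite addnC; apply: inH_KexpD.
case: (gapsE Gt Kt) => ->; first by apply: inH_gt_frobenius; lia.
case: (leqP h al) => [le_hal|]; last by move=> lt; apply: inH_gt_frobenius; lia.
have [e1 [e2 [K1 K2 E]]] := Kexp_split_fsubal.
have H1 := inH_KexpD K1 Hh h0 hal; have H2 := inH_KexpD K2 Hh h0 hal.
have [e1h|e1h] := eqVneq (e1 + h)%N al; last first.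
  have := inH_KexpD K2 H1 ltac:(lia) ltac:(exact/eqP).
  by rewrite (_ : e2 + (e1 + h) = h + (f - al))%N //; lia.
have [e2h|e2h] := eqVneq (e2 + h)%N al; last first.
  have := inH_KexpD K1 H2 ltac:(lia) ltac:(exact/eqP).
  by rewrite (_ : e1 + (e2 + h) = h + (f - al))%N //; lia.
have G3 := KgenD (KgenD (Kgen_Kexp K1) (Kgen_Kexp K1)) (Kgen_Kexp K1).
have K3 : ~ Kexp (e1 + e1 + e1).
  by move=> []; split; [lia | rewrite (_ : f - (e1 + e1 + e1) = h)%N //; lia].
by case: (gapsE G3 K3); lia.
Qed.

Lemma al_atom i : (0 < i < al)%N -> inH i -> ~ inH (al - i).
Proof.
move=> /andP[i0 ial] Hi Hali; apply: frobenius_notH.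
have := inHD Hali (inH_KgenD Hi ltac:(lia) ltac:(lia) Kgen_fsubal).
by rewrite (_ : al - i + (i + (f - al)) = f)%N //; lia.
Qed.

Lemma conductorP z : Cs z <-> [/\ Rs z, z 0%N = 0 & z al = 0].
Proof.
split=> [Cz|[Rz z0 zal] s Ss n /smul_neq0[i le_in [zi sni]]].
  have coef_f t : Kgen t -> (t <= f)%N -> z (f - t)%N = 0.
    move=> Gt le_tf; apply/eqP; apply: contraT => zft.
    have := Cz _ (ringS_smono Gt) f; rewrite smono_mulR le_tf.
    by move=> /(_ zft) /frobenius_notH.
  split.
  - move=> n zn; have := Cz _ (ringS_smono (Kgen_Kexp (Kexp_H inH0))) n.
    by rewrite smono_mulR subn0; apply.
  - by have := coef_f f Kgen_frobenius (leqnn f); rewrite subnn.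
  - by have := coef_f _ Kgen_fsubal (leq_subr _ _); rewrite subKn.
rewrite -(subnKC le_in); apply: inH_KgenD (ringS_supp Ss sni); first exact: Rz.
  by move=> i0; rewrite i0 z0 eqxx in zi.
by move=> ial; rewrite ial zal eqxx in zi.
Qed.

Lemma conductor0P z : Rs z -> Cs z <-> z 0%N = 0 /\ z al = 0.
Proof. by move=> Rz; rewrite conductorP; split=> [[]|[]]. Qed.

Lemma conductor_subP u w : Rs u -> Rs w ->
  Cs (ssub u w) <-> u 0%N = w 0%N /\ u al = w al.
Proof.
move=> Ru Rw; rewrite conductor0P; last exact: supp_in_ssub.
rewrite /ssub /sadd /sopp; split=> [[u0 ual]|[-> ->]]; last by rewrite !subrr.
by split; apply/eqP; rewrite -subr_eq0 ?u0 ?ual.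
Qed.

Lemma smul_coef_al x y : Rs x -> Rs y -> smul x y al = x 0%N * y al + x al * y 0%N.
Proof.
move=> Rx Ry; rewrite (@smul_coef2 _ _ _ _ 0 al) ?subn0 ?subnn //; first lia.
move=> i le_ial i0 ial; have [->|xi] := eqVneq (x i) 0; first by rewrite mul0r.
have [->|yi] := eqVneq (y (al - i)%N) 0; first by rewrite mulr0.
by case: (@al_atom i); [lia | apply: Rx | apply: Ry].
Qed.

Section IsoToSymmetry.
Variable psi : series k -> 'I_m -> series k.
Hypothesis psi_R : forall x, Ks x -> forall j, Rs (psi x j).
Hypothesis psi_add : forall x y, Ks x -> Ks y -> forall j,
  Cs (ssub (ssub (psi (sadd x y) j) (psi x j)) (psi y j)).
Hypothesis psi_scale : forall r x, Rs r -> Ks x -> forall j,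
  Cs (ssub (psi (smul r x) j) (smul r (psi x j))).
Hypothesis psi_onto : forall v : 'I_m -> series k, (forall j, Rs (v j)) ->
  exists x, Ks x /\ forall j, Cs (ssub (psi x j) (v j)).
Hypothesis psi_ker : forall x, Ks x -> ((forall j, Cs (psi x j)) <-> Rs x).

Lemma psi_coefD x y j : Ks x -> Ks y ->
  psi (sadd x y) j 0%N = psi x j 0%N + psi y j 0%N /\
  psi (sadd x y) j al = psi x j al + psi y j al.
Proof.
move=> Kx Ky; have /conductorP[_ /eqP c0 /eqP cal] := psi_add (j := j) Kx Ky.
by split; apply/eqP; rewrite -subr_eq0 opprD addrA.
Qed.

Lemma psi_coefM r x j : Rs r -> Ks x ->
  psi (smul r x) j 0%N = r 0%N * psi x j 0%N /\
  psi (smul r x) j al = r 0%N * psi x j al + r al * psi x j 0%N.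
Proof.
move=> Rr Kx; have Rrpsi := supp_in_smul inHD Rr (psi_R (j := j) Kx).
have := psi_scale (j := j) Rr Kx; rewrite conductor_subP //; last first.
  by apply: psi_R; apply: canonK_mul.
by rewrite smul_coef0 smul_coef_al //; apply: psi_R.
Qed.

Lemma psi_smono_coef0 g j : Kexp g -> inH (g + al) -> psi (smono k g) j 0%N = 0.
Proof.
move=> Kg Hgal; have Kal : Ks (smono k g) by apply: canonK_smono.
have Rt : Rs (smul (smono k al) (smono k g)).
  apply: supp_in_ext (supp_in_smono (E := inH) (_ : inH (al + g))) _.
    by rewrite addnC.
  by move=> n; rewrite smono_mul.
have /(_ j) := (psi_ker (canonK_R Rt)).2 Rt.
rewrite conductor0P => [[_]|]; last by apply: psi_R; apply: canonK_R.
have [_ ->] := psi_coefM j (supp_in_smono (E := inH) al_H) Kal.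
by rewrite smono_al0 smono_diag mul0r add0r mul1r.
Qed.

(* [t^(f - c q)] is killed by [t^al] modulo [R]; in [(R/c)^m] it is then [t^al] times
   another class [y], and [t^(f - c q) - t^al y] would lie in [R]. *)
Lemma iso_cs_sum_neq_f p q : (p < m)%N -> (q < m)%N -> (c p + c q)%N <> f.
Proof.
move=> pm qm pqf; set g := (f - c q)%N.
have gE : g = c p by rewrite /g -pqf addnK.
have Kg : Kexp g by apply: Kexp_cs_compl; lia.
have Kt : Ks (smono k g) by apply: canonK_smono.
have Hgal : inH (g + al) by rewrite gE; apply: PF_addH; [apply: cs_PF; lia | |].
pose v j := sconst (- psi (smono k g) j al).
have [y [Ky psiy]] := psi_onto (v := v) (fun j => R_sconst (c := _)).
have Ral : Rs (smono k al) by apply: supp_in_smono.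
have Ku : Ks (smul (smono k al) y) by apply: canonK_mul.
pose z := sadd (smono k g) (smul (smono k al) y).
have Kz : Ks z by apply: canonK_add.
have Rz : Rs z.
  apply/(psi_ker Kz) => j; rewrite conductor0P; last by apply: psi_R.
  have [Dz0 Dzal] := psi_coefD j Kt Ku.
  have [My0 Myal] := psi_coefM j Ral Ky.
  have [y0 _] := (conductor_subP (psi_R (j := j) Ky) (R_sconst (c := _))).1 (psiy j).
  rewrite /z Dz0 Dzal My0 Myal y0 psi_smono_coef0 // smono_al0 smono_diag /v sconst0.
  by split; ring.
have yg : (al <= g)%N -> y (g - al)%N = 0.
  move=> le_al_g; apply/eqP; apply: contraT => /(canonK_supp Ky) Kgal; exfalso; apply: Kgal.
  split; first lia.
  by rewrite (_ : f - (g - al) = c q + al)%N; [apply: PF_addH; [apply: cs_PF; lia | |] | lia].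
have zg : z g = 1.
  by rewrite /z /sadd smono_mulL smono_diag; case: leqP => [/yg->|_]; rewrite addr0.
have /Rz : z g != 0 by rewrite zg oner_neq0.
exact: cs_compl_notH qm.
Qed.

End IsoToSymmetry.

Section NoComplementaryPF.
Hypothesis cs_sum_neq_f : forall p q, (p < m)%N -> (q < m)%N -> (c p + c q)%N <> f.

Lemma cs_compl_notPF p : (p < m)%N -> ~ isPF a (f - c p).
Proof.
move=> pm PFfc; have pr : (p < r)%N by lia.
have [|q qm cq] := PF_index_ltm PFfc; first by have := PF_neq0 (cs_PF pr); lia.
by apply: (cs_sum_neq_f qm pm); rewrite cq subnK // cs_leqf.
Qed.

Lemma al_generator : exists i, a i = al.
Proof.
have m0 : (0 < m)%N by lia.
have Hfc := cs_compl_notH m0; have notPF := cs_compl_notPF m0.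
have [i Hi] : exists i, ~ inH (f - c 0 + a i).
  by apply: contrapT => /forallNP Hi; apply: notPF; split=> // i; apply: contrapT.
exists i; apply: contrapT => ai_al; apply: Hi; apply: inH_KexpD ai_al.
- by apply: Kexp_cs_compl; lia.
- exact: inH_gen.
- by have := a_gt0 i; lia.
Qed.

Lemma cs_compl_addal p : (p < m)%N -> exists2 q, (q < m)%N & c q = (f - c p + al)%N.
Proof.
move=> pm; have pr : (p < r)%N by lia.
have Kfc := Kexp_cs_compl pr; have Hfc := cs_compl_notH pm.
have Hfcal := notPF_addal_notH Hfc Kfc (cs_compl_notPF pm).
have [le_fcal_f cpH] := (gap_leq_frobenius Hfcal, (cs_PF pr).1).
have le_cf := cs_leqf pr.
case: (Kexp_gap_PF (KexpD Kfc al_H) Hfcal) => [PFfcal|PFcal].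
  by apply: PF_index_ltm => // fcal; apply: cpH; rewrite (_ : c p = al) //; lia.
case: cpH; have := PF_addH PFcal al_H al_neq0.
by rewrite (_ : f - (f - c p + al) + al = c p)%N //; lia.
Qed.

Lemma cs_pair_sum p : (p < m)%N -> (c p + c (m.-1 - p))%N = (f + al)%N.
Proof.
pose s p := index (f - c p + al)%N cs.
have sE q : (q < m)%N -> (s q < m)%N /\ c (s q) = (f - c q + al)%N.
  move=> qm; have [q' q'm cq'] := cs_compl_addal qm.
  rewrite /s -cq' index_uniq //; first exact: ltm_ltr.
  exact: sorted_uniq ltn_trans ltnn _ cs_sorted.
have s_decr q q' : (q < q')%N -> (q' < m)%N -> (s q' < s q)%N.
  move=> lt_qq' q'm; have [[sq cq] [sq' cq']] := (sE q (ltn_trans lt_qq' q'm), sE q' q'm).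
  rewrite ltnNge; apply/negP => le_sqsq'.
  have := cs_leq le_sqsq' (ltm_ltr sq'); rewrite cq cq'.
  by have := cs_ltn lt_qq' (ltm_ltr q'm); have := cs_leqf (ltm_ltr q'm); lia.
move=> pm; have := sE p pm; rewrite (decreasing_rev (fun q qm => (sE q qm).1) s_decr pm).
by case=> _ ->; have := cs_leqf (ltm_ltr pm); lia.
Qed.

End NoComplementaryPF.

Lemma cs_compl_neq_addal p q : (p < r)%N -> (q < r)%N -> (f - c p <> f - c q + al)%N.
Proof.
move=> pr qr E; apply: (cs_PF qr).1.
have := cs_leqf pr; have := cs_leqf qr => le_qf le_pf.
by rewrite (_ : c q = c p + al)%N; [apply: PF_addH; [apply: cs_PF | |] | lia].
Qed.

Lemma smul_coef_compl u x p : Rs u -> Ks x -> (p < r)%N ->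
  smul u x (f - c p)%N = u 0%N * x (f - c p)%N.
Proof.
move=> Ru /canonKP Kx pr; rewrite (@smul_coef1 _ _ _ _ 0) ?subn0 // => i le_i i0.
have [->|ui] := eqVneq (u i) 0; first by rewrite mul0r.
have [->|xi] := eqVneq (x (f - c p - i)%N) 0; first by rewrite mulr0.
case: (Kx _ xi); split; first lia.
have le_pf := cs_leqf pr; rewrite (_ : f - (f - c p - i) = c p + i)%N; last lia.
by apply: PF_addH; [apply: cs_PF | apply: Ru | apply/eqP].
Qed.

Section SymmetricPF.
Hypothesis cs_pair : forall p, (p < m)%N -> (c p + c (m.-1 - p))%N = (f + al)%N.

Lemma cs_compl_addal_notH p : (p < m)%N -> ~ inH (f - c p + al).
Proof.
move=> pm; have := cs_pair pm; have := cs_leqf (ltm_ltr pm) => le_pf pair.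
rewrite (_ : f - c p + al = c (m.-1 - p))%N; last lia.
by apply: (cs_PF _).1; apply: ltm_ltr; lia.
Qed.

Lemma smul_coef_compl_al u x p : Rs u -> Ks x -> (p < m)%N ->
  smul u x (f - c p + al)%N = u 0%N * x (f - c p + al)%N + u al * x (f - c p)%N.
Proof.
move=> Ru /canonKP Kx pm.
rewrite (@smul_coef2 _ _ _ _ 0 al) ?subn0 ?addnK ?leq_addl //; first lia.
move=> i le_i i0 ial; have [->|ui] := eqVneq (u i) 0; first by rewrite mul0r.
have [->|xi] := eqVneq (x (f - c p + al - i)%N) 0; first by rewrite mulr0.
case: (cs_compl_addal_notH pm).
have := inH_KexpD (Kx _ xi) (Ru _ ui) (elimN eqP i0) (elimN eqP ial).
by rewrite subnK.
Qed.

Lemma gap_Kexp_cs_compl x : Kexp x -> ~ inH x ->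
  exists2 p, (p < m)%N & x = (f - c p)%N \/ x = (f - c p + al)%N.
Proof.
move=> Kx Hx; have le_xf := gap_leq_frobenius Hx.
have xf : x <> f by move=> xf; apply: Kexp_frobenius; rewrite -xf.
case: (Kexp_gap_PF Kx Hx) => [PFx|PFfx].
  have [q qm cq] := PF_index_ltm PFx xf.
  exists (m.-1 - q)%N; first lia.
  have := cs_leqf (_ : m.-1 - q < r)%N; have := cs_pair qm.
  by rewrite cq; right; lia.
have [|q qm cq] := PF_index_ltm PFfx.
  by move=> fxf; apply: Hx; rewrite (_ : x = 0)%N; [apply: inH0 | lia].
by exists q => //; left; lia.
Qed.

(* The [j]-th coordinate of [K/R = (R/c)^m]: the coefficients of [t^(f - c j)] and
   [t^(f - c j + al)], placed at the exponents [0] and [al] of [R/c]. *)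
Definition Kcoord x (j : 'I_m) : series k :=
  fun n => if n == 0%N then x (f - c j)%N else if n == al then x (f - c j + al)%N else 0.

Lemma Kcoord0 x j : Kcoord x j 0%N = x (f - c j)%N.
Proof. by []. Qed.

Lemma Kcoordal x j : Kcoord x j al = x (f - c j + al)%N.
Proof. by rewrite /Kcoord (introF eqP al_neq0) eqxx. Qed.

Lemma Kcoord_R x j : Rs (Kcoord x j).
Proof.
move=> n; rewrite /Kcoord; case: (n =P 0%N) => [-> _|_]; first exact: inH0.
by case: (n =P al) => [-> _|_] //; rewrite eqxx.
Qed.

Lemma Kcoord_subP x y j :
  Cs (ssub (Kcoord x j) (Kcoord y j)) <->
  x (f - c j)%N = y (f - c j)%N /\ x (f - c j + al)%N = y (f - c j + al)%N.
Proof.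
have [Rx Ry] := (Kcoord_R (x := x) (j := j), Kcoord_R (x := y) (j := j)).
by rewrite (conductor_subP Rx Ry) !Kcoordal.
Qed.

Lemma Kcoord_cond0P x j :
  Cs (Kcoord x j) <-> x (f - c j)%N = 0 /\ x (f - c j + al)%N = 0.
Proof. by rewrite (conductor0P (Kcoord_R (x := x) (j := j))) Kcoordal. Qed.

Lemma Kcoord_add x y j :
  Cs (ssub (ssub (Kcoord (sadd x y) j) (Kcoord x j)) (Kcoord y j)).
Proof.
rewrite conductor0P; last by apply: supp_in_ssub; [apply: supp_in_ssub|]; apply: Kcoord_R.
by rewrite /ssub /sadd /sopp !Kcoord0 !Kcoordal; split; ring.
Qed.

Lemma Kcoord_scale u x j : Rs u -> Ks x ->
  Cs (ssub (Kcoord (smul u x) j) (smul u (Kcoord x j))).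
Proof.
move=> Ru Kx; have Rux : Rs (smul u (Kcoord x j)).
  by apply: (supp_in_smul inHD Ru); apply: Kcoord_R.
rewrite (conductor_subP (Kcoord_R (x := smul u x) (j := j)) Rux) Kcoordal.
rewrite smul_coef0 (smul_coef_al Ru (Kcoord_R (x := x) (j := j))) !Kcoord0 !Kcoordal.
by rewrite smul_coef_compl ?smul_coef_compl_al // ltm_ltr.
Qed.

Lemma Kcoord_onto v : (forall j, Rs (v j)) ->
  exists x, Ks x /\ forall j, Cs (ssub (Kcoord x j) (v j)).
Proof.
move=> Rv; pose x n := \sum_(p < m) ((if n == (f - c p)%N then v p 0%N else 0) +
                                    (if n == (f - c p + al)%N then v p al else 0)).
exists x; split.
  apply/canonKP => n /sum_ord_neq0[p]; have Kp := Kexp_cs_compl (ltm_ltr (ltn_ord p)).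
  case: (n =P (f - c p)%N) => [-> //|_].
  by case: (n =P (f - c p + al)%N) => [-> _|_]; [apply: KexpD | rewrite addr0 eqxx].
move=> j; have jr := ltm_ltr (ltn_ord j).
have neq_al p : (p < m)%N -> (f - c j == f - c p + al)%N = false.
  by move=> pm; apply/eqP/cs_compl_neq_addal => //; apply: ltm_ltr.
have neq p : p != j -> (f - c j == f - c p)%N = false.
  move=> pj; apply: contraNF pj => /eqP/(cs_compl_inj jr (ltm_ltr (ltn_ord p))) jp.
  by apply/eqP/val_inj.
rewrite (conductor_subP (Kcoord_R (x := x) (j := j)) (Rv j)) Kcoord0 Kcoordal /x.
split; rewrite (bigD1 j) //= big1 ?addr0 => [|p pj].
- by rewrite eqxx neq_al ?addr0.
- by rewrite neq // neq_al ?addr0.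
- rewrite eqxx (_ : (f - c j + al == f - c j)%N = false) ?add0r //; apply/eqP; lia.
- rewrite eqn_add2r neq // (_ : (f - c j + al == f - c p)%N = false) ?addr0 //.
  by apply/eqP/nesym/cs_compl_neq_addal => //; apply: ltm_ltr.
Qed.

Lemma Kcoord_ker x : Ks x -> (forall j, Cs (Kcoord x j)) <-> Rs x.
Proof.
move=> Kx; split=> [coord0 n xn|Rx j].
  apply: contrapT => Hn; have [p pm xE] := gap_Kexp_cs_compl (canonK_supp Kx xn) Hn.
  have /Kcoord_cond0P[x0 xal] := coord0 (Ordinal pm).
  by case: xE xn => -> /=; rewrite ?x0 ?xal eqxx.
apply/Kcoord_cond0P; split; apply/eqP; apply: contraT => /Rx.
  by move/(cs_compl_notH (ltn_ord j)).
by move/(cs_compl_addal_notH (ltn_ord j)).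
Qed.

Lemma symmetric_quot_iso : quot_iso_pow Rs Ks Rs Cs m.
Proof.
exists Kcoord; split; first by move=> x _ j; apply: Kcoord_R.
split; first by move=> x y _ xy j; apply/Kcoord_subP; rewrite !xy.
split; first by move=> x y _ _ j; apply: Kcoord_add.
split; first by move=> u x Ru Kx j; apply: Kcoord_scale.
by split; [apply: Kcoord_onto | apply: Kcoord_ker].
Qed.

End SymmetricPF.
End TwoAGL.

Lemma pair_sum_fsub al : (forall p, (p < m)%N -> (c p + c (m.-1 - p))%N = (f + al)%N) ->
  (al <= f)%N /\ Kgen (f - al).
Proof.
have m0 : (0 < m)%N by lia.
move=> /(_ 0%N m0); have := cs_ltf (_ : m.-1 - 0 < m)%N; have := cs_leqf (ltm_ltr m0).
move=> le_c0f lt_cmf pair; split; first lia.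
rewrite (_ : f - al = (f - c 0) + (f - c (m.-1 - 0)))%N; last lia.
by apply: KgenD; apply/Kgen_Kexp/Kexp_cs_compl/ltm_ltr; lia.
Qed.

Lemma two_AGL_quot_iso_iff : is_2AGL k a f cs ->
  quot_iso_pow Rs Ks Rs Cs m <->
  exists i, forall p, (p < m)%N -> (c p + c (m.-1 - p))%N = (f + a i)%N.
Proof.
case/two_AGL_gaps => al [al_H al_neq0 al_leqf Kgen_fsubal gapsE].
have m0 : (0 < m)%N by lia.
split=> [[psi [psi_R [_ [psi_add [psi_scale [psi_onto psi_ker]]]]]]|[i pair]].
  have no_pair := iso_cs_sum_neq_f al_H al_neq0 al_leqf Kgen_fsubal gapsE
                    psi_R psi_add psi_scale psi_onto psi_ker.
  have [i ai] : exists i, a i = al by apply: al_generator.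
  by exists i; rewrite ai; apply: cs_pair_sum.
have [le_ai_f Gfai] := pair_sum_fsub pair.
have ai0 : a i <> 0%N by have := a_gt0 i; lia.
have Kfai : ~ Kexp (f - a i) by move/(Kexp_subf le_ai_f); apply; apply: inH_gen.
have gapsE' y : Kgen y -> ~ Kexp y -> y = f \/ y = (f - a i)%N.
  move=> Gy Ky; case: (gapsE _ Gy Ky) => [|->]; first by left.
  by case: (gapsE _ Gfai Kfai) => [|<-]; [lia | right].
by apply: symmetric_quot_iso; first exact: inH_gen.
Qed.

End PseudoFrobenius.
End Frobenius.
End Semigroup.

Theorem proposition6p8 (k : fieldType) (l : nat) (a : 'I_l -> nat) (f : nat)
  (cs : seq nat) :
  (forall i, 0 < a i)%N ->
  \big[gcdn/0%N]_(i < l) a i = 1%N ->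
  is_frobenius a f ->
  sorted ltn cs ->
  (forall n : nat, n \in cs <-> isPF a n) ->
  (2 <= size cs)%N ->
  is_2AGL k a f cs ->
  (quot_iso_pow (semigroupR (k:=k) a) (canonK a f cs) (semigroupR a)
     (conductor a f cs) (size cs).-1
   <->
   exists j : 'I_l, forall i : nat, (1 <= i <= (size cs).-1)%N ->
     (f + a j = nth 0 cs i.-1 + nth 0 cs (size cs - i).-1)%N).
Proof.
(* The gcd hypothesis is implied by the existence of the Frobenius number. *)
move=> a_gt0 _ frob_f cs_sorted csP cs_ge2 AGL2.
rewrite (two_AGL_quot_iso_iff a_gt0 frob_f cs_sorted csP cs_ge2 AGL2).
split=> [[j pair]|[j pair]]; exists j.
  move=> i /andP[i1 im]; rewrite -(pair i.-1); last lia.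
  by congr (_ + nth 0 cs _)%N; lia.
move=> p pm; rewrite (pair p.+1) /=; last lia.
by congr (_ + nth 0 cs _)%N; lia.
Qed.
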